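(* Let $C$ be a field of characteristic zero, $L=\sum_{k=0}^{r_L}l_k(x)\partial^k\in C[x][\partial]$ of order $r_L$ with $\deg l_k\le d_L$, and $P\in C[x,y]$ with $\deg_yP=r_P$, $\deg_xP=d_P$, square-free in $C(x)[y]$ and without non-constant divisors in $\bar C[y]$. Let $f$ be a solution of $L$ and $g$ be a solution of $P$, and let $U(x,y)=P_y(x,y)^2\,l_{r_L}(y)$. For every $\ell\in\mathbb N$ there exist polynomials $E_{\ell,j}\in C[x,y]$, $0\le j<r_L$, with $\deg_xE_{\ell,j}\le\ell(2d_P-1)$ and $\deg_yE_{\ell,j}\le\ell(2r_P+d_L-1)$ for all $0\le j<r_L$, such that \[ \partial^\ell(f\circ g)=\frac1{U(x,g)^\ell}\sum_{j=0}^{r_L-1}E_{\ell,j}(x,g)\,(f^{(j)}\circ g). \]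
   Context: $P_y$ denotes the partial derivative of $P$ with respect to $y$. A solution $g$ of $P$ satisfies $P(x,g(x))=0$; a solution $f$ of $L$ satisfies $L(f)=0$. Compositions are understood in the power series sense: for $\alpha\in C$, $g\in C[[x-\alpha]]$ and $f\in C[[x-g(\alpha)]]$, $f\circ g\in C[[x-\alpha]]$ (for $C=\mathbb C$, composition of analytic functions); $\partial$ acts as $d/dx$. *)

From HB Require Import structures.
From mathcomp Require Import all_boot all_order all_algebra.
From mathcomp Require Import fraction.
Set Implicit Arguments. Unset Strict Implicit. Unset Printing Implicit Defensive.
Import Order.TTheory GRing.Theory Num.Theory.
Local Open Scope ring_scope.

(* Bivariate polynomials Q in C[x,y] are represented as {poly {poly C}}:
   the OUTER variable is y, the coefficients Q`_i are polynomials in x. *)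

Section Defs.
Variable C : fieldType.

(* Formal power series in t = x - a (the expansion point a is kept apart). *)
Definition fps := nat -> C.

Definition fps_mul (a b : fps) : fps :=
  fun n => \sum_(i < n.+1) a i * b (n - i)%N.
Definition fps_one : fps := fun n => (n == 0%N)%:R.
Definition fps_pow (a : fps) (k : nat) : fps := iter k (fps_mul a) fps_one.
Definition fps_deriv (a : fps) : fps := fun n => a n.+1 *+ n.+1.

Definition poly_at (p : {poly C}) (a : C) : fps :=
  fun n => (p \Po ('X + a%:P))`_n.

Definition bivar_eval (Q : {poly {poly C}}) (a : C) (g : fps) : fps :=
  fun n => \sum_(i < size Q) fps_mul (poly_at Q`_i a) (fps_pow g i) n.

(* composition f o g, where g is a series in x - a and f a series in
   x - g(a) (g(a) = g 0):  (f o g) = sum_n f_n (g - g(a))^n *)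
Definition fps_comp (f g : fps) : fps :=
  fun k => \sum_(n < k.+1)
     f n * fps_pow (fun m => if m == 0%N then 0 else g m) n k.

Definition solves_L (rL : nat) (l : nat -> {poly C}) (b : C) (f : fps) : Prop :=
  forall n, \sum_(k < rL.+1) fps_mul (poly_at (l k) b) (iter k fps_deriv f) n = 0.

Definition solves_P (P : {poly {poly C}}) (a : C) (g : fps) : Prop :=
  forall n, bivar_eval P a g n = 0.

Definition degx (Q : {poly {poly C}}) : nat := (\max_(i < size Q) (size (nth 0%R Q i)).-1)%N.

Definition toCxy (P : {poly {poly C}}) : {poly {fraction {poly C}}} :=
  map_poly (@FracField.tofrac {poly C}) P.

Definition squarefree (F : fieldType) (p : {poly F}) : Prop :=
  forall q : {poly F}, q ^+ 2 %| p -> (size q <= 1)%N.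

(* P has no non-constant divisor in Cbar[y]: stated for every algebraically
   closed extension K of C (embedding iota). *)
Definition no_nonconst_y_divisor (P : {poly {poly C}}) : Prop :=
  forall (K : closedFieldType) (iota : {rmorphism C -> K})
         (q : {poly K}) (h : {poly {poly K}}),
    map_poly (map_poly iota) P = map_poly polyC q * h -> (size q <= 1)%N.

End Defs.

(* Differentiating [P(x, g) = 0] gives [P_y(x, g) g' = - P_x(x, g)], and [L f = 0] gives
   [l_rL(g) f^(rL)(g) = - sum_(k < rL) l_k(g) f^(k)(g)].  So if
   [U(x, g)^ell (f o g)^(ell) = sum_j E_{ell,j}(x, g) f^(j)(g)], differentiating once more
   and multiplying by [U(x, g) = P_y(x, g)^2 l_rL(g)] gives the same shape at [ell + 1], with
   [E_{ell+1,j}] given by a polynomial recurrence that raises the degree in [x] by at most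
   [2 d_P - 1] and the degree in [y] by at most [2 r_P + d_L - 1].  To compare coefficients of power series, [g] and [f]
   are replaced by their truncations at a large order [M]; the two relations then hold
   modulo [x^(M - rL)], and each differentiation loses one order. *)

From HB Require Import structures.
From mathcomp Require Import all_boot all_order all_algebra.
From mathcomp Require Import fraction.
From mathcomp Require Import ring zify.
Import Order.TTheory GRing.Theory Num.Theory.
Local Open Scope ring_scope.

Set Implicit Arguments. Unset Strict Implicit. Unset Printing Implicit Defensive.

Section XnDivisibility.
Variable C : fieldType.
Implicit Types p H : {poly C}.

Lemma dvdXnP K p : reflect (forall i, (i < K)%N -> p`_i = 0) ('X^K %| p).
Proof.
apply: (iffP idP) => [/dvdpP[q ->] i ltiK | p0]; first by rewrite coefMXn ltiK.
apply/dvdpP; exists (drop_poly K p); rewrite -[LHS](poly_take_drop K).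
suff -> : take_poly K p = 0 by rewrite add0r.
by apply/polyP => i; rewrite coef_take_poly coef0; case: ifP => // /p0.
Qed.

Lemma dvdXn_leq m n p : (m <= n)%N -> 'X^n %| p -> 'X^m %| p.
Proof. by move=> le_mn; apply: dvdp_trans; apply: dvdp_exp2l. Qed.

Lemma dvdXn_deriv K p : 'X^K %| p -> 'X^(K.-1) %| p^`().
Proof.
move=> /dvdXnP p0; apply/dvdXnP => i ltiK.
by rewrite coef_deriv p0 ?mul0rn //; lia.
Qed.

Lemma dvdXn_expr H i : H`_0 = 0 -> 'X^i %| H ^+ i.
Proof.
move=> H0; apply: dvdp_exp2r; rewrite -['X]expr1; apply/dvdXnP.
by case.
Qed.

Lemma dvdXn_comp K p H : H`_0 = 0 -> 'X^K %| p -> 'X^K %| p \Po H.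
Proof.
move=> H0 /dvdpP[q ->]; rewrite comp_polyM rmorphXn /= comp_polyX.
exact/dvdp_mull/dvdXn_expr.
Qed.

End XnDivisibility.

Definition derivx (R : nzRingType) (Q : {poly {poly R}}) : {poly {poly R}} :=
  map_poly (@deriv R) Q.

Section BivariateEvaluation.
Variable R : comNzRingType.
Implicit Types (p G : {poly R}) (Q : {poly {poly R}}).

Definition bieval (a : R) G Q := (map_poly (comp_poly ('X + a%:P)) Q).[G].

Lemma bievalD a G : {morph bieval a G : Q1 Q2 / Q1 + Q2}.
Proof. by move=> Q1 Q2; rewrite /bieval rmorphD hornerD. Qed.

Lemma bievalB a G : {morph bieval a G : Q1 Q2 / Q1 - Q2}.
Proof. by move=> Q1 Q2; rewrite /bieval rmorphB hornerD hornerN. Qed.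

Lemma bievalM a G : {morph bieval a G : Q1 Q2 / Q1 * Q2}.
Proof. by move=> Q1 Q2; rewrite /bieval rmorphM hornerM. Qed.

Lemma bievalXn a G n : {morph bieval a G : Q / Q ^+ n}.
Proof. by move=> Q; rewrite /bieval rmorphXn horner_exp. Qed.

Lemma bievalMn a G n : {morph bieval a G : Q / Q *+ n}.
Proof. by move=> Q; rewrite /bieval rmorphMn hornerMn. Qed.

Lemma bieval_nat a G n : bieval a G n%:R = n%:R.
Proof. by rewrite /bieval rmorph_nat -polyC_natr hornerC. Qed.

Lemma bieval_polyC a G p : bieval a G p^:P = p \Po G.
Proof.
rewrite /bieval -map_poly_comp; congr _.[G]; apply: eq_map_poly => c /=.
exact: comp_polyC.
Qed.

Lemma deriv_horner_poly Q G : Q.[G]^`() = (derivx Q).[G] + Q^`().[G] * G^`().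
Proof.
elim/poly_ind: Q => [|Q c IH].
  by rewrite /derivx map_poly0 deriv0 !horner0 mul0r addr0 deriv0.
have -> : derivx (Q * 'X + c%:P) = derivx Q * 'X + (c^`())%:P.
  by apply/polyP => -[|i];
    rewrite /derivx !(coef_map, coefD, coefMX, coefC) /= ?deriv0 ?add0r ?addr0.
rewrite derivMXaddC !hornerMXaddC hornerD hornerMX derivD derivM IH.
ring.
Qed.

Lemma deriv_comp_XaddC a p : (p \Po ('X + a%:P))^`() = p^`() \Po ('X + a%:P).
Proof. by rewrite deriv_comp derivD derivX derivC addr0 mulr1. Qed.

Lemma deriv_bieval a G Q :
  (bieval a G Q)^`() = bieval a G (derivx Q) + bieval a G Q^`() * G^`().
Proof.
rewrite /bieval deriv_horner_poly deriv_map /derivx -!map_poly_comp.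
by congr (_.[G] + _); apply: eq_map_poly => p /=; rewrite deriv_comp_XaddC.
Qed.

End BivariateEvaluation.

Lemma big_ord_widen_eq0 (R : nmodType) n N (T : nat -> R) :
  (n <= N)%N -> (forall i, (n <= i < N)%N -> T i = 0) ->
  \sum_(i < n) T i = \sum_(i < N) T i.
Proof.
move=> le_nN T0; rewrite (big_ord_widen N T le_nN) big_mkcond.
apply: eq_bigr => i _; case: ifPn => // /negbTE lt_in.
by rewrite T0 // leqNgt lt_in ltn_ord.
Qed.

Section SeriesTruncation.
Variable C : fieldType.
Implicit Types (s t : fps C) (p q : {poly C}).

Definition fps_agree K s p := forall i, (i < K)%N -> s i = p`_i.

Lemma fps_agree_leq K K' s p : (K' <= K)%N -> fps_agree K s p -> fps_agree K' s p.
Proof. by move=> le_K sp i ltiK; apply: sp; lia. Qed.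

Lemma fps_agree_trunc K s : fps_agree K s (\poly_(i < K) s i).
Proof. by move=> i ltiK; rewrite coef_poly ltiK. Qed.

Lemma fps_agree_poly_at K p b : fps_agree K (poly_at p b) (p \Po ('X + b%:P)).
Proof. by []. Qed.

Lemma fps_agree_mul K s t p q :
  fps_agree K s p -> fps_agree K t q -> fps_agree K (fps_mul s t) (p * q).
Proof.
move=> sp tq i ltiK; rewrite /fps_mul coefM; apply: eq_bigr => j _.
by rewrite sp ?tq //; have := ltn_ord j; lia.
Qed.

Lemma fps_agree_pow K s p k : fps_agree K s p -> fps_agree K (fps_pow s k) (p ^+ k).
Proof.
move=> sp; elim: k => [|k IH]; first by move=> i _; rewrite coef1.
by rewrite exprS /fps_pow iterS; apply: fps_agree_mul.
Qed.

Lemma fps_agree_deriv K s p : fps_agree K s p -> fps_agree K.-1 (fps_deriv s) p^`().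
Proof. by move=> sp i ltiK; rewrite coef_deriv /fps_deriv sp //; lia. Qed.

Lemma fps_agree_derivn K s p j :
  fps_agree K s p -> fps_agree (K - j) (iter j (@fps_deriv C) s) p^`(j).
Proof.
move=> sp; elim: j => [|j IH]; first by rewrite subn0 derivn0.
by rewrite iterS derivnS subnS; apply: fps_agree_deriv.
Qed.

Lemma fps_agree_comp K s t p q :
  fps_agree K s p -> fps_agree K t q -> fps_agree K (fps_comp s t) (p \Po (q - (t 0%N)%:P)).
Proof.
move=> sp tq k ltkK; set H := q - _.
have H0 : H`_0 = 0 by rewrite coefB coefC -tq ?subrr //; lia.
have tH : fps_agree K (fun m => if m == 0%N then 0 else t m) H.
  by case=> [|m] ltmK; rewrite ?H0 // coefB coefC /= subr0 tq.
have highH i : (k < i)%N -> (H ^+ i)`_k = 0.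
  by move=> ltki; apply/dvdXnP: ltki; apply: dvdXn_expr.
rewrite /fps_comp coef_comp_poly.
transitivity (\sum_(i < k.+1) p`_i * (H ^+ i)`_k).
  by apply: eq_bigr => i _; rewrite sp ?(fps_agree_pow i tH) //; have := ltn_ord i; lia.
pose N := maxn (size p) k.+1.
rewrite (@big_ord_widen_eq0 _ _ N (fun i => p`_i * (H ^+ i)`_k)) ?leq_maxr //.
  symmetry; apply: (@big_ord_widen_eq0 _ _ N (fun i => p`_i * (H ^+ i)`_k)).
    exact: leq_maxl.
  by move=> i /andP[lepi _]; rewrite nth_default ?mul0r.
by move=> i /andP[ltki _]; rewrite highH ?mulr0.
Qed.

Lemma fps_mul_poly_eq0 q s :
  q != 0 -> (forall n, fps_mul (fun i => q`_i) s n = 0) -> forall i, s i = 0.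
Proof.
move=> q_neq0 qs0.
have q_ex : exists i, q`_i != 0.
  by exists (size q).-1; rewrite -lead_coefE lead_coef_eq0.
case: (ex_minnP q_ex) => v qv_neq0 min_v.
have q_low i : (i < v)%N -> q`_i = 0.
  by move=> ltiv; apply: contraTeq ltiv => /min_v; rewrite leqNgt.
elim/ltn_ind => m IH; have := qs0 (m + v)%N.
have ltv : (v < (m + v).+1)%N by lia.
rewrite /fps_mul (bigD1 (Ordinal ltv)) //= addnK big1 ?addr0.
  by move/eqP; rewrite mulf_eq0 (negbTE qv_neq0) => /eqP.
move=> i /eqP neq_iv; case: (ltnP i v) => [ltiv | leiv]; first by rewrite q_low ?mul0r.
have neq_iv' : nat_of_ord i <> v by move=> eq_iv; apply: neq_iv; apply: val_inj.
by rewrite IH ?mulr0 //; have := ltn_ord i; lia.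
Qed.

Lemma fps_agree_bivar_eval K Q a g G :
  fps_agree K g G -> fps_agree K (bivar_eval Q a g) (bieval a G Q).
Proof.
move=> gG i ltiK; rewrite /bieval (horner_coef_wide _ (size_poly _ _)) coef_sum.
apply: eq_bigr => j _; rewrite coef_map /=.
by rewrite (fps_agree_mul (fps_agree_poly_at _ _) (fps_agree_pow j gG) ltiK).
Qed.

End SeriesTruncation.

Section DegreeBounds.
Variable R : nzRingType.
Implicit Types (p : {poly R}) (P Q : {poly {poly R}}).

Definition bisize_le (A B : nat) Q := (forall i, (size (Q`_i)%R <= A)%N) /\ (size Q <= B)%N.

Lemma bisize_le_widen A B A' B' Q :
  bisize_le A B Q -> (A <= A')%N -> (B <= B')%N -> bisize_le A' B' Q.
Proof.
move=> [QA QB] leA leB.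
by split=> [i|]; [apply: leq_trans (QA i) leA | apply: leq_trans QB leB].
Qed.

Lemma bisize_leD A B P Q : bisize_le A B P -> bisize_le A B Q -> bisize_le A B (P + Q).
Proof.
move=> [PA PB] [QA QB]; split=> [i|]; rewrite ?coefD; apply: leq_trans (size_polyD _ _) _.
  by rewrite geq_max PA QA.
by rewrite geq_max PB QB.
Qed.

Lemma bisize_leN A B Q : bisize_le A B Q -> bisize_le A B (- Q).
Proof. by move=> [QA QB]; split=> [i|]; rewrite ?coefN size_polyN. Qed.

Lemma bisize_leB A B P Q : bisize_le A B P -> bisize_le A B Q -> bisize_le A B (P - Q).
Proof. by move=> BP /bisize_leN; apply: bisize_leD. Qed.

Lemma bisize_leM A B A' B' P Q :
  bisize_le A B P -> bisize_le A' B' Q -> bisize_le (A + A').-1 (B + B').-1 (P * Q).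
Proof.
move=> [PA PB] [QA QB]; split=> [i|]; last by apply: leq_trans (size_polyMleq _ _) _; lia.
rewrite coefM; apply: (big_ind (fun q : {poly R} => size q <= (A + A').-1)%N) => [|p q|j _].
- by rewrite size_poly0.
- by move=> ? ?; apply: leq_trans (size_polyD _ _) _; rewrite geq_max; apply/andP.
- by apply: leq_trans (size_polyMleq _ _) _; have := PA j; have := QA (i - j)%N; lia.
Qed.

Lemma bisize_le_nat n : bisize_le 1 1 (n%:R : {poly {poly R}}).
Proof.
rewrite -polyC_natr; split=> [i|]; last exact: size_polyC_leq1.
by rewrite coefC; case: eqP => _; rewrite ?size_poly0 // -polyC_natr size_polyC_leq1.
Qed.

Lemma bisize_leMn A B Q n : bisize_le A B Q -> bisize_le A B (Q *+ n).
Proof. by rewrite -mulr_natr => /bisize_leM/(_ (bisize_le_nat n)); rewrite !addn1. Qed.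

Lemma bisize_le_polyC p : bisize_le 1 (size p) p^:P.
Proof. by split=> [i|]; rewrite ?coef_map /= ?size_polyC_leq1 ?size_map_polyC. Qed.

Lemma bisize_le_derivx A B Q : bisize_le A B Q -> bisize_le A.-1 B (derivx Q).
Proof.
move=> [QA QB]; split=> [i|]; last exact: leq_trans (size_poly _ _) QB.
by rewrite coef_map; apply: leq_trans (size_poly _ _) _; rewrite -!subn1 leq_sub2r.
Qed.

Lemma bisize_le_deriv A B Q : bisize_le A B Q -> bisize_le A B.-1 Q^`().
Proof.
move=> [QA QB]; split=> [i|].
  by rewrite coef_deriv -scaler_nat; apply: leq_trans (size_scale_leq _ _) _.
by apply: leq_trans (size_poly _ _) _; rewrite -!subn1 leq_sub2r.
Qed.

End DegreeBounds.

Lemma bisize_le_degx (C : fieldType) (P : {poly {poly C}}) :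
  bisize_le (degx P).+1 (size P) P.
Proof.
split=> // i; case: (ltnP i (size P)) => [ltiP | lePi]; last by rewrite nth_default ?size_poly0.
have := @leq_bigmax _ (fun j : 'I_(size P) => (size P`_j).-1) (Ordinal ltiP).
by rewrite /degx /= => le_i; apply: leq_trans (leqSpred _) _; rewrite ltnS.
Qed.

Section DerivativeCoefficients.
Variable R : nzRingType.
Implicit Types (P : {poly {poly R}}) (l : nat -> {poly R}).

(* [Uprime P (l rL)] at [(x, g)] is [d/dx U(x, g(x))] with [g'] replaced by [- P_x / P_y]. *)
Definition Uprime P (lr : {poly R}) : {poly {poly R}} :=
  (lr^:P * (derivx P^`() * P^`() - P^`()^`() * derivx P)) *+ 2
  - P^`() * derivx P * (lr^`())^:P.

(* The [E_{ell,j}] of the paper: [E_{ell+1,j}] is the coefficient of [f^(j)(g)] in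
   [U (sum_j E_{ell,j} f^(j)(g))' - ell U' sum_j E_{ell,j} f^(j)(g)], after substituting
   [P_y g' = - P_x] and [l_rL(g) f^(rL)(g) = - sum_(k < rL) l_k(g) f^(k)(g)]. *)
Fixpoint Ecoef P l (rL ell j : nat) : {poly {poly R}} :=
  match ell with
  | 0 => (j == 0)%:R
  | ell.+1 =>
      P^`() * (l rL)^:P
        * (P^`() * derivx (Ecoef P l rL ell j) - derivx P * (Ecoef P l rL ell j)^`())
      - (j != 0)%:R * (P^`() * derivx P * (l rL)^:P * Ecoef P l rL ell j.-1)
      + P^`() * derivx P * Ecoef P l rL ell rL.-1 * (l j)^:P
      - Uprime P (l rL) *+ ell * Ecoef P l rL ell j
  end.

End DerivativeCoefficients.

Section EcoefBounds.
Variables (R : nzRingType) (P : {poly {poly R}}) (l : nat -> {poly R}).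
Variables (rL dL rP dP : nat).
Hypothesis P_size : bisize_le dP.+1 rP.+1 P.
Hypothesis l_size : forall k, (k <= rL)%N -> (size (l k) <= dL.+1)%N.

Let Py := bisize_le_deriv P_size.
Let Px := bisize_le_derivx P_size.

Lemma bisize_le_lift k : (k <= rL)%N -> bisize_le 1 dL.+1 (l k)^:P.
Proof. by move=> le_k; apply: bisize_le_widen (bisize_le_polyC _) _ (l_size le_k). Qed.

Lemma bisize_le_Uprime : bisize_le (2 * dP) (2 * rP + dL) (Uprime P (l rL)).
Proof.
have lr := bisize_le_lift (leqnn rL).
have dlr : bisize_le 1 dL ((l rL)^`())^:P.
  apply: bisize_le_widen (bisize_le_polyC _) _ _ => //.
  by apply: leq_trans (size_poly _ _) _; have := l_size (leqnn rL); lia.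
have Pxy := bisize_le_derivx Py; have Pyy := bisize_le_deriv Py.
have inner : bisize_le (2 * dP) (2 * rP).-1
                      (derivx P^`() * P^`() - P^`()^`() * derivx P).
  by apply: bisize_leB; [apply: bisize_le_widen (bisize_leM Pxy Py) _ _
                        | apply: bisize_le_widen (bisize_leM Pyy Px) _ _]; lia.
apply: bisize_leB.
  by apply: bisize_leMn; apply: bisize_le_widen (bisize_leM lr inner) _ _; lia.
by apply: bisize_le_widen (bisize_leM (bisize_leM Py Px) dlr) _ _; lia.
Qed.

Lemma bisize_le_Ecoef_step ell X Y :
  (forall j, (j < rL)%N -> bisize_le X.+1 Y.+1 (Ecoef P l rL ell j)) ->
  forall j, (j < rL)%N ->
    bisize_le (X + (2 * dP).-1).+1 (Y + (2 * rP + dL).-1).+1 (Ecoef P l rL ell.+1 j).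
Proof.
move=> E_size j lt_j; have E_j := E_size j lt_j.
have E_pred : bisize_le X.+1 Y.+1 (Ecoef P l rL ell j.-1) by apply: E_size; lia.
have E_last : bisize_le X.+1 Y.+1 (Ecoef P l rL ell rL.-1) by apply: E_size; lia.
have lr := bisize_le_lift (leqnn rL); have lj := bisize_le_lift (ltnW lt_j).
have inner : bisize_le (dP + X) (rP + Y)
    (P^`() * derivx (Ecoef P l rL ell j) - derivx P * (Ecoef P l rL ell j)^`()).
  apply: bisize_leB; [apply: bisize_le_widen (bisize_leM Py (bisize_le_derivx E_j)) _ _
                     | apply: bisize_le_widen (bisize_leM Px (bisize_le_deriv E_j)) _ _]; lia.
rewrite [Ecoef _ _ _ ell.+1 j]/=.
apply: bisize_leB; first apply: bisize_leD; first apply: bisize_leB.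
- by apply: bisize_le_widen (bisize_leM (bisize_leM Py lr) inner) _ _; lia.
- apply: bisize_le_widen (bisize_leM (bisize_le_nat _ _)
                           (bisize_leM (bisize_leM (bisize_leM Py Px) lr) E_pred)) _ _; lia.
- by apply: bisize_le_widen (bisize_leM (bisize_leM (bisize_leM Py Px) E_last) lj) _ _; lia.
- by apply: bisize_le_widen (bisize_leM (bisize_leMn ell bisize_le_Uprime) E_j) _ _; lia.
Qed.

Lemma bisize_le_Ecoef ell j : (j < rL)%N ->
  bisize_le (ell * (2 * dP).-1).+1 (ell * (2 * rP + dL).-1).+1 (Ecoef P l rL ell j).
Proof.
elim: ell j => [|ell IH] j lt_j; first exact: bisize_le_widen (bisize_le_nat _ _) _ _.
by rewrite !(mulSnr ell); apply: bisize_le_Ecoef_step.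
Qed.

End EcoefBounds.

Lemma mul_deriv_exprM (R : comNzRingType) (u v : {poly R}) n :
  u * (u ^+ n * v)^`() - u^`() * (u ^+ n * v) *+ n = u ^+ n.+1 * v^`().
Proof. by rewrite derivM deriv_exp; case: n => [|n] /=; rewrite ?mulr0n ?exprS; ring. Qed.

Section Recurrence.
Variable C : fieldType.
Variables (a : C) (P : {poly {poly C}}) (l : nat -> {poly C}) (r : nat).
Variables (G : {poly C}) (F : nat -> {poly C}) (K : nat).
(* [G] and [F j] stand for [g] and [f^(j) o g]; the relations [d/dx P(x, g) = 0] and [L f = 0]
   are only assumed modulo [x^K]. *)
Hypothesis deriv_F : forall j, (F j)^`() = F j.+1 * G^`().
Hypothesis dvd_curve : 'X^K %| (bieval a G P)^`().
Hypothesis dvd_operator : 'X^K %| \sum_(k < r.+2) (l k \Po G) * F k.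

Local Notation ev := (bieval a G).
Local Notation E ell j := (ev (Ecoef P l r.+1 ell j)).
Local Notation Ex ell j := (ev (derivx (Ecoef P l r.+1 ell j))).
Local Notation Ey ell j := (ev (Ecoef P l r.+1 ell j)^`()).
Local Notation py := (ev P^`()).
Local Notation px := (ev (derivx P)).
Local Notation pxy := (ev (derivx P^`())).
Local Notation pyy := (ev P^`()^`()).
Local Notation lr := (l r.+1 \Po G).
Local Notation dlr := ((l r.+1)^`() \Po G).
Local Notation V := ((lr * (pxy * py - pyy * px)) *+ 2 - py * px * dlr).
Let u := ev (P^`() ^+ 2 * (l r.+1)^:P).
Let Y ell := \sum_(j < r.+1) E ell j * F j.

Lemma U_at_G : u = py ^+ 2 * lr.
Proof. by rewrite /u bievalM bievalXn bieval_polyC. Qed.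

Lemma deriv_U_at_G : u^`() = (py * (pxy + pyy * G^`()) * lr) *+ 2 + py ^+ 2 * (dlr * G^`()).
Proof. by rewrite U_at_G derivM deriv_exp deriv_bieval deriv_comp /=; ring. Qed.

Lemma deriv_Ecoef_sum ell : (Y ell)^`() = \sum_(j < r.+1) Ex ell j * F j
  + G^`() * \sum_(j < r.+1) Ey ell j * F j + G^`() * \sum_(j < r.+1) E ell j * F j.+1.
Proof.
rewrite /Y linear_sum !mulr_sumr -!big_split /=; apply: eq_bigr => j _.
by rewrite derivM deriv_bieval deriv_F; ring.
Qed.

Lemma Ecoef_succ_at_G ell j : E ell.+1 j = py * lr * (py * Ex ell j - px * Ey ell j)
  - (j != 0)%:R * (py * px * lr * E ell j.-1) + py * px * E ell r * (l j \Po G)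
  - V *+ ell * E ell j.
Proof.
by rewrite [Ecoef _ _ _ ell.+1 j]/= /Uprime
  !(bievalB, bievalD, bievalM, bieval_nat, bievalMn, bieval_polyC).
Qed.

Lemma Ecoef_sum_succ ell : Y ell.+1 = py * lr * py * \sum_(j < r.+1) Ex ell j * F j
  - py * lr * px * \sum_(j < r.+1) Ey ell j * F j
  - py * px * lr * \sum_(j < r) E ell j * F j.+1
  + py * px * E ell r * \sum_(k < r.+1) (l k \Po G) * F k - V *+ ell * Y ell.
Proof.
have -> : \sum_(j < r) E ell j * F j.+1
    = \sum_(j < r.+1) (j != 0)%:R * E ell j.-1 * F j.
  by rewrite big_ord_recl /= !mul0r add0r; apply: eq_bigr => j _; rewrite mul1r.
rewrite /Y !mulr_sumr -!sumrB -!big_split /= -!sumrB.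
by apply: eq_bigr => j _; rewrite Ecoef_succ_at_G; ring.
Qed.

Lemma Ecoef_step ell : 'X^K %| u * (Y ell)^`() - u^`() * Y ell *+ ell - Y ell.+1.
Proof.
(* The defect is a combination of [d/dx P(x, G)] and of the operator applied at [G]. *)
suff -> : u * (Y ell)^`() - u^`() * Y ell *+ ell - Y ell.+1
    = (ev P)^`() * (py * lr * \sum_(j < r.+1) Ey ell j * F j
                    + py * lr * \sum_(j < r.+1) E ell j * F j.+1
                    - ((pyy * lr) *+ 2 + py * dlr) * Y ell *+ ell)
      - py * px * E ell r * \sum_(k < r.+2) (l k \Po G) * F k.
  by apply: dvdp_sub; [apply: dvdp_mulr | apply: dvdp_mull].
rewrite deriv_bieval deriv_Ecoef_sum deriv_U_at_G U_at_G Ecoef_sum_succ.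
rewrite [\sum_(k < r.+2) _]big_ord_recr [\sum_(j < r.+1) E ell j * F j.+1]big_ord_recr /=.
ring.
Qed.

Lemma Ecoef_identity ell : 'X^(K - ell) %| u ^+ ell * (F 0%N)^`(ell) - Y ell.
Proof.
elim: ell => [|ell IH].
  rewrite expr0 mul1r derivn0 /Y big_ord_recl big1 => [|j _]; last first.
    by rewrite bieval_nat mul0r.
  by rewrite bieval_nat mul1r addr0 subrr dvdp0.
set Z := u ^+ ell * _ - _ in IH.
have -> : u ^+ ell.+1 * (F 0%N)^`(ell.+1) - Y ell.+1
    = (u * Z^`() - u^`() * Z *+ ell) + (u * (Y ell)^`() - u^`() * Y ell *+ ell - Y ell.+1).
  by rewrite derivnS -mul_deriv_exprM /Z derivB; ring.
rewrite subnS; apply: dvdp_add; last by apply: dvdXn_leq (Ecoef_step ell); lia.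
apply: dvdp_sub; first exact/dvdp_mull/dvdXn_deriv.
by rewrite -mulr_natr; apply/dvdp_mulr/dvdp_mull/(dvdXn_leq (leq_pred _)).
Qed.

End Recurrence.

Section TruncatedSolutions.
Variables (C : fieldType) (rL : nat) (l : nat -> {poly C}) (P : {poly {poly C}}).
Variables (a : C) (g f : fps C) (M : nat).
Hypotheses (l_rL_neq0 : l rL != 0) (M_gt0 : (0 < M)%N).
Hypotheses (g_solves : solves_P P a g) (f_solves : solves_L rL l (g 0%N) f).

Let G := \poly_(i < M) g i.
Let Phi := \poly_(i < M) f i.
Let H := G - (g 0%N)%:P.
Let F j := Phi^`(j) \Po H.

Lemma truncated_deriv_F j : (F j)^`() = F j.+1 * G^`().
Proof. by rewrite /F deriv_comp -derivnS /H derivB derivC subr0. Qed.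

Lemma truncated_curve_dvd : 'X^(M.-1) %| (bieval a G P)^`().
Proof.
apply/dvdXn_deriv/dvdXnP => i ltiM.
by rewrite -(fps_agree_bivar_eval P a (fps_agree_trunc g) ltiM) g_solves.
Qed.

Lemma truncated_operator_dvd : 'X^(M - rL) %| \sum_(k < rL.+1) (l k \Po G) * F k.
Proof.
set b := g 0%N.
have H0 : H`_0 = 0 by rewrite coefB coefC coef_poly M_gt0 subrr.
suff -> : \sum_(k < rL.+1) (l k \Po G) * F k
    = (\sum_(k < rL.+1) (l k \Po ('X + b%:P)) * Phi^`(k)) \Po H.
  apply: dvdXn_comp H0 _; apply/dvdXnP => i ltiM.
  rewrite coef_sum -[X in _ = X](f_solves i); apply: eq_bigr => k _; symmetry.
  apply: (fps_agree_mul (fps_agree_poly_at _ _)) ltiM.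
  apply: fps_agree_leq _ (fps_agree_derivn (j := k) (fps_agree_trunc (K := M) f)).
  by have := ltn_ord k; lia.
rewrite raddf_sum; apply: eq_bigr => k _ /=.
by rewrite comp_polyM -comp_polyA comp_polyD comp_polyX comp_polyC /H subrK.
Qed.

Lemma truncated_solution_eq0 : rL = 0%N -> Phi = 0.
Proof.
move=> rL0; have f0 : forall i, f i = 0.
  apply: (@fps_mul_poly_eq0 _ (l 0%N \Po ('X + (g 0%N)%:P))).
    by rewrite comp_poly2_eq0 ?size_XaddC // -rL0.
  by move=> n; have := f_solves n; rewrite rL0 big_ord1.
by apply/polyP => i; rewrite coef_poly coef0 f0; case: ifP.
Qed.

Lemma truncated_identity ell :
  'X^(M - rL - ell) %| bieval a G (P^`() ^+ 2 * (l rL)^:P) ^+ ell * (Phi \Po H)^`(ell)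
                       - \sum_(j < rL) bieval a G (Ecoef P l rL ell j) * F j.
Proof.
case: rL l_rL_neq0 f_solves truncated_solution_eq0 truncated_operator_dvd => [|r] _ _.
  move=> /(_ erefl) ->.
  by rewrite comp_poly0 derivn_poly0 ?size_poly0 // mulr0 big_ord0 subr0 dvdp0.
move=> _ dvd_operator; rewrite -[Phi](derivn0 Phi) -/(F 0%N).
apply: Ecoef_identity => //; first exact: truncated_deriv_F.
by apply: dvdXn_leq truncated_curve_dvd; lia.
Qed.

Lemma truncated_series_identity ell n : (n + ell + rL < M)%N ->
  fps_mul (fps_pow (bivar_eval (P^`() ^+ 2 * (l rL)^:P) a g) ell)
          (iter ell (@fps_deriv C) (fps_comp f g)) n
  = \sum_(j < rL) fps_mul (bivar_eval (Ecoef P l rL ell j) a g)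
                         (fps_comp (iter j (@fps_deriv C) f) g) n.
Proof.
move=> ltM; have agree_g := fps_agree_trunc (K := M) g.
have agree_f := fps_agree_trunc (K := M) f.
have lt_n : (n < M - rL - ell)%N by lia.
move/dvdXnP/(_ n lt_n)/eqP: (truncated_identity ell).
rewrite coefB subr_eq0 coef_sum => /eqP eq_n.
rewrite (fps_agree_mul (fps_agree_leq (leq_subr ell M)
                          (fps_agree_pow ell (fps_agree_bivar_eval _ a agree_g)))
                       (fps_agree_derivn (j := ell) (fps_agree_comp agree_f agree_g))); last lia.
rewrite eq_n; apply: eq_bigr => j _.
rewrite (fps_agree_mul (fps_agree_leq (leq_subr j M) (fps_agree_bivar_eval _ a agree_g))
                       (fps_agree_comp (fps_agree_derivn (j := j) agree_f)
                                       (fps_agree_leq (leq_subr j M) agree_g))) //.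
by have := ltn_ord j; lia.
Qed.

End TruncatedSolutions.

Unset Implicit Arguments. Set Strict Implicit.

Theorem lemma4 (C : fieldType) (char0 : [pchar C] =i pred0)
  (rL dL : nat) (l : nat -> {poly C})
  (hord : l rL != 0) (hdegL : forall k, (k <= rL)%N -> (size (l k) <= dL.+1)%N)
  (P : {poly {poly C}}) (rP dP : nat)
  (hdegy : size P = rP.+1) (hdegx : degx P = dP)
  (hsqf : squarefree (toCxy P)) (hdiv : no_nonconst_y_divisor P)
  (a : C) (g : fps C) (f : fps C)
  (hg : solves_P P a g) (hf : solves_L rL l (g 0%N) f) :
  let U : {poly {poly C}} := (P^`()) ^+ 2 * map_poly polyC (l rL) in
  forall ell : nat,
  exists E : nat -> {poly {poly C}},
    (forall j, (j < rL)%N ->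
       (forall i : nat, (size (nth 0%R (E j) i) <= ell * (2 * dP).-1 + 1)%N) /\
       (size (E j) <= ell * (2 * rP + dL).-1 + 1)%N) /\
    forall n,
      fps_mul (fps_pow (bivar_eval U a g) ell) (iter ell (@fps_deriv C) (fps_comp f g)) n
      = \sum_(j < rL) fps_mul (bivar_eval (E j) a g) (fps_comp (iter j (@fps_deriv C) f) g) n.
Proof.
move=> U ell; exists (Ecoef P l rL ell); split=> [j lt_j | n].
  have P_size : bisize_le dP.+1 rP.+1 P by rewrite -hdegx -hdegy; apply: bisize_le_degx.
  by rewrite !addn1; apply: bisize_le_Ecoef.
by apply: (truncated_series_identity (M := (n + ell + rL).+1)).
Qed.
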